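(* Let $B$ be a finite set with $|B|\ge 2$ and let $f$ be an $\mathsf{A}$-shop on $B$. Then $\langle f\rangle$ contains an $\mathsf{A}$-shop $g$ for which there are an element $b\in B$ and sets $B',B''\subseteq B$ with $B'$ non-empty, such that $\{b\},B',B''$ are pairwise disjoint with union $B$, and (1) $g(b)=B$; (2) $g(x)=\{x\}$ for all $x\in B'$; (3) for every $x\in B''$ there exists $y\in B'$ with $g(x)=\{y\}$.
   Context: A shop on $B$ is a map $f:B\to\mathcal{P}(B)\setminus\{\emptyset\}$ such that every $y\in B$ lies in $f(x)$ for some $x\in B$. An $\mathsf{A}$-shop is a shop $f$ such that $f(b)=B$ for some $b\in B$. The identity shop is $x\mapsto\{x\}$; the composition of shops is $(g\circ f)(x)=\{z:\exists y\ (y\in f(x)\wedge z\in g(y))\}$; a shop $f$ is a sub-shop of $g$ if $f(x)\subseteq g(x)$ for all $x$. A down-she-monoid (DSM) on $B$ is a set of shops on $B$ containing the identity, closed under composition and under taking sub-shops (that are shops). $\langle f\rangle$ denotes the smallest DSM containing $f$. *)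

From mathcomp Require Import all_boot.
Set Implicit Arguments. Unset Strict Implicit. Unset Printing Implicit Defensive.

Definition shop (B : finType) (f : B -> {set B}) : Prop :=
  (forall x, f x != set0) /\ (forall y, exists x, y \in f x).

Definition Ashop (B : finType) (f : B -> {set B}) : Prop :=
  shop f /\ exists b, f b = [set: B].

Definition id_shop (B : finType) : B -> {set B} := fun x => [set x].

Definition comp_shop (B : finType) (g f : B -> {set B}) : B -> {set B} :=
  fun x => \bigcup_(y in f x) g y.

Definition sub_shop (B : finType) (f g : B -> {set B}) : Prop :=
  forall x, f x \subset g x.

Definition DSM (B : finType) (M : (B -> {set B}) -> Prop) : Prop :=
  [/\ forall h, M h -> shop h,
      M (@id_shop B),
      (forall f g, M f -> M g -> M (comp_shop g f))
    & (forall f g, M g -> shop f -> sub_shop f g -> M f)].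

Definition gen_DSM (B : finType) (f : B -> {set B}) : (B -> {set B}) -> Prop :=
  fun h => forall M, DSM M -> M f -> M h.

From mathcomp Require Import all_boot.
Set Implicit Arguments. Unset Strict Implicit. Unset Printing Implicit Defensive.

(* Let f b = B and choose phi x in f x for every x.  The "pointed" shop
   sending b to B and x <> b to {phi x} is a sub-shop of f, and pointed shops
   compose like the underlying maps, so <f> contains the pointed shop of every
   power of phi, in particular of an idempotent power e.  Keeping fixed the
   points that e sends to b gives an idempotent psi with psi x <> b for x <> b,
   whose pointed shop is a sub-shop of the square of that of e.  Take for B'
   the fixed points of psi other than b. *)

Section Generated.

Variables (B : finType) (f : B -> {set B}).

Lemma gen_DSM_self : gen_DSM f f.
Proof. by move=> M _. Qed.

Lemma gen_DSM_comp g h : gen_DSM f g -> gen_DSM f h -> gen_DSM f (comp_shop h g).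
Proof.
move=> fg fh M DM Mf; case: (DM) => _ _ Mcomp _.
by apply: Mcomp; [apply: fg | apply: fh].
Qed.

Lemma gen_DSM_sub g h : gen_DSM f g -> shop h -> sub_shop h g -> gen_DSM f h.
Proof.
move=> fg sh hg M DM Mf; case: (DM) => _ _ _ Msub.
by apply: Msub sh hg; apply: fg.
Qed.

End Generated.

Lemma mem_comp_shop (B : finType) (g f : B -> {set B}) x y z :
  y \in f x -> z \in g y -> z \in comp_shop g f x.
Proof. by move=> yfx zgy; apply/bigcupP; exists y. Qed.

Lemma comp_shop_full (B : finType) (g f : B -> {set B}) b :
  f b = [set: B] -> g b = [set: B] -> comp_shop g f b = [set: B].
Proof.
move=> fb gb; apply/setP => z; rewrite inE.
by apply: (@mem_comp_shop _ _ _ _ b); rewrite ?fb ?gb inE.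
Qed.

Lemma shop_selector (B : finType) (f : B -> {set B}) :
  shop f -> exists phi : B -> B, forall x, phi x \in f x.
Proof.
move=> [f_neq0 _]; exists (fun x => odflt x [pick y in f x]) => x.
by case: pickP => [//|f0]; case/set0Pn: (f_neq0 x) => y; rewrite f0.
Qed.

Section PointedShop.

Variables (B : finType) (b : B).

Definition pointed_shop (phi : B -> B) : B -> {set B} :=
  fun x => if x == b then [set: B] else [set phi x].

Lemma pointed_shop_at phi : pointed_shop phi b = [set: B].
Proof. by rewrite /pointed_shop eqxx. Qed.

Lemma mem_pointed_shop phi x : phi x \in pointed_shop phi x.
Proof. by rewrite /pointed_shop; case: ifP; rewrite inE. Qed.

Lemma pointed_shop_shop phi : shop (pointed_shop phi).
Proof.
split=> [x|y]; last by exists b; rewrite pointed_shop_at inE.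
by apply/set0Pn; exists (phi x); apply: mem_pointed_shop.
Qed.

Lemma pointed_shop_Ashop phi : Ashop (pointed_shop phi).
Proof. by split; [apply: pointed_shop_shop | exists b; apply: pointed_shop_at]. Qed.

Lemma pointed_shop_sub phi (g : B -> {set B}) :
  g b = [set: B] -> (forall x, x != b -> phi x \in g x) ->
  sub_shop (pointed_shop phi) g.
Proof.
move=> gb phig x; rewrite /pointed_shop.
by case: (altP (x =P b)) => [->|xb]; rewrite ?gb ?subxx // sub1set phig.
Qed.

Lemma pointed_shop_comp_sub psi phi :
  sub_shop (pointed_shop (psi \o phi))
           (comp_shop (pointed_shop psi) (pointed_shop phi)).
Proof.
apply: pointed_shop_sub => [|x _].
  by apply: comp_shop_full; apply: pointed_shop_at.
exact: mem_comp_shop (mem_pointed_shop phi x) (mem_pointed_shop psi (phi x)).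
Qed.

Lemma gen_DSM_pointed_iter (f : B -> {set B}) phi :
  gen_DSM f (pointed_shop phi) -> forall n, gen_DSM f (pointed_shop (iter n.+1 phi)).
Proof.
move=> fphi; elim=> [//|n IHn].
exact: gen_DSM_sub (gen_DSM_comp IHn fphi) (pointed_shop_shop _)
                   (pointed_shop_comp_sub _ _).
Qed.

Definition avoid_point (e : B -> B) (x : B) : B := if e x == b then x else e x.

Variable e : B -> B.
Hypothesis e_idem : idempotent_fun e.

Lemma avoid_point_idem : idempotent_fun (avoid_point e).
Proof.
move=> x; rewrite /= /avoid_point.
case: (altP (e x =P b)) => [-> | exb]; first by rewrite eqxx.
by rewrite [e (e x)]e_idem (negbTE exb).
Qed.

Lemma avoid_point_neq x : x != b -> avoid_point e x != b.
Proof. by rewrite /avoid_point; case: ifP => // /negbT. Qed.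

Lemma pointed_avoid_point_sub :
  sub_shop (pointed_shop (avoid_point e))
           (comp_shop (pointed_shop e) (pointed_shop e)).
Proof.
apply: pointed_shop_sub => [|x _].
  by apply: comp_shop_full; apply: pointed_shop_at.
apply: mem_comp_shop (mem_pointed_shop e x) _.
rewrite /avoid_point /pointed_shop.
by case: ifP => [_|_]; rewrite ?inE // [e (e x)]e_idem.
Qed.

End PointedShop.

Lemma iter_idempotent_of_eq (T : Type) (phi : T -> T) i j :
  i < j -> iter i phi =1 iter j phi -> exists n, idempotent_fun (iter n.+1 phi).
Proof.
move=> ltij eqij; set p := j - i.
have p_gt0 : 0 < p by rewrite subn_gt0.
have iter_period_i m x : iter (i + m * p) phi x = iter i phi x.
  elim: m x => [|m IHm] x; first by rewrite addn0.
  by rewrite mulSn addnCA iterD IHm -iterD /p subnK ?eqij // ltnW.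
have iter_period c m x : i <= c -> iter (c + m * p) phi x = iter c phi x.
  by move=> leic; rewrite -(subnK leic) -addnA iterD iter_period_i -iterD.
exists (i.+1 * p).-1; rewrite prednK ?muln_gt0 // => x /=.
by rewrite -iterD iter_period // (leq_trans (leqnSn i)) // leq_pmulr.
Qed.

Lemma iter_idempotent (T : finType) (phi : T -> T) :
  exists n, idempotent_fun (iter n.+1 phi).
Proof.
pose F (k : 'I_#|{ffun T -> T}|.+1) := [ffun x => iter k phi x].
have /injectivePn [i [j neqij eqF]] : ~~ injectiveb F.
  by apply/injectiveP => /leq_card; rewrite card_ord ltnn.
have eqij : iter i phi =1 iter j phi.
  by move=> x; have := congr1 (fun g : {ffun T -> T} => g x) eqF; rewrite !ffunE.
case: (ltngtP i j) => [ltij|ltji|/val_inj eq_ij]; last by rewrite eq_ij eqxx in neqij.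
  exact: iter_idempotent_of_eq ltij eqij.
by apply: iter_idempotent_of_eq ltji _ => x; rewrite eqij.
Qed.

Lemma pointed_idempotent_split (B : finType) (b : B) (psi : B -> B) :
  1 < #|B| -> idempotent_fun psi -> (forall x, x != b -> psi x != b) ->
  exists B' B'' : {set B},
    B' != set0 /\
    b \notin B' /\ b \notin B'' /\ [disjoint B' & B''] /\
    [set b] :|: B' :|: B'' = [set: B] /\
    (forall x, x \in B' -> pointed_shop b psi x = [set x]) /\
    (forall x, x \in B'' -> exists2 y, y \in B' & pointed_shop b psi x = [set y]).
Proof.
move=> card_gt1 psi_idem psi_neq.
have mem_B' x : x != b -> psi x \in [set y | (y != b) && (psi y == y)].
  by move=> xb; rewrite inE psi_neq //= [psi (psi x)]psi_idem.
exists [set y | (y != b) && (psi y == y)], [set y | (y != b) && (psi y != y)].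
split.
  have : 0 < #|[set~ b]| by rewrite cardsC1 -ltnS (ltn_predK card_gt1).
  rewrite card_gt0 => /set0Pn [x]; rewrite in_setC1 => xb.
  by apply/set0Pn; exists (psi x); apply: mem_B'.
split; first by rewrite inE eqxx.
split; first by rewrite inE eqxx.
split.
  by rewrite disjoint_subset; apply/subsetP => x; rewrite !inE => /andP[-> ->].
split; first by apply/setP => x; rewrite !inE; case: (x == b); case: (psi x == x).
split; first by move=> x; rewrite inE /pointed_shop => /andP[/negbTE -> /eqP ->].
move=> x; rewrite inE => /andP[xb _]; exists (psi x); first exact: mem_B'.
by rewrite /pointed_shop (negbTE xb).
Qed.

Theorem lemma3p5 (B : finType) (f : B -> {set B}) :
  2 <= #|B| -> Ashop f ->
  exists g : B -> {set B},
    gen_DSM f g /\ Ashop g /\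
    exists (b : B) (B' B'' : {set B}),
      B' != set0 /\
      b \notin B' /\ b \notin B'' /\ [disjoint B' & B''] /\
      [set b] :|: B' :|: B'' = [set: B] /\
      g b = [set: B] /\
      (forall x, x \in B' -> g x = [set x]) /\
      (forall x, x \in B'' -> exists2 y, y \in B' & g x = [set y]).
Proof.
move=> card_gt1 [shop_f [b fb]].
have [phi phi_f] := shop_selector shop_f.
have f_phi : gen_DSM f (pointed_shop b phi) :=
  gen_DSM_sub (@gen_DSM_self _ f) (pointed_shop_shop b phi)
              (pointed_shop_sub fb (fun x _ => phi_f x)).
have [n e_idem] := iter_idempotent phi.
set e := iter n.+1 phi in e_idem.
have f_e : gen_DSM f (pointed_shop b e) := gen_DSM_pointed_iter f_phi n.
set psi := avoid_point b e.
exists (pointed_shop b psi); split.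
  exact: gen_DSM_sub (gen_DSM_comp f_e f_e) (pointed_shop_shop b psi)
                     (pointed_avoid_point_sub b e_idem).
split; first exact: pointed_shop_Ashop.
have [B' [B'' [? [? [? [? [? [? ?]]]]]]]] :=
  pointed_idempotent_split card_gt1 (avoid_point_idem b e_idem) (@avoid_point_neq _ b e).
by exists b, B', B''; rewrite pointed_shop_at.
Qed.
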